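(* Let $P$ be a finite ranked poset with rank function $r$, let $P^*\subseteq P$ be a set of marked elements with $\min(P)\cup\max(P)\subseteq P^*$, and let $\lambda^r\colon P^*\to\mathbb{Z}$ be given by $\lambda^r(a)=r(a)$. Let $\mathbf{r}\in\mathbb{R}^{P\setminus P^*}$ be the point with coordinates $r_p=r(p)$. Then $\mathbf{r}$ is the unique interior lattice point of the marked order polytope $\mathcal{O}(P,\lambda^r)$, regarded as a subset of $\mathbb{R}^{P\setminus P^*}$.
   Context: A rank function on a poset $P$ is a map $r\colon P\to\mathbb{Z}$ with $r(p)=r(q)-1$ for every covering relation $p\prec q$; $P$ is ranked if it has one. The marked order polytope $\mathcal{O}(P,\lambda)$, for an order-preserving $\lambda\colon P^*\to\mathbb{R}$, is the set of $\mathbf{x}\in\mathbb{R}^P$ with $x_a=\lambda(a)$ for $a\in P^*$ and $x_p\le x_q$ for every covering relation $p\prec q$ in $P$; it is regarded as a subset of $\mathbb{R}^{P\setminus P^*}$ via projection onto the unmarked coordinates, and ''interior'' refers to the interior in $\mathbb{R}^{P\setminus P^*}$. A lattice point is a point of $\mathbb{Z}^{P\setminus P^*}$. *)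

From HB Require Import structures.
From mathcomp Require Import all_boot all_order all_algebra.
From mathcomp Require Import reals.
Set Implicit Arguments. Unset Strict Implicit. Unset Printing Implicit Defensive.
Import Order.TTheory GRing.Theory Num.Theory.
Local Open Scope ring_scope.

Section MarkedOrderPolytope.
Variables (d : Order.disp_t) (T : finPOrderType d).

Definition covers (p q : T) : bool :=
  (p < q)%O && [forall z : T, ~~ ((p < z)%O && (z < q)%O)].

Definition is_rank_function (r : T -> int) : Prop :=
  forall p q : T, covers p q -> r p = r q - 1.

Definition minimal_elt (p : T) : bool := [forall z : T, ~~ (z < p)%O].
Definition maximal_elt (p : T) : bool := [forall z : T, ~~ (p < z)%O].

Definition unmarked (Pstar : {set T}) := {p : T | p \notin Pstar}.

Variable R : realType.

Definition extend (Pstar : {set T}) (lam : T -> R) (x : unmarked Pstar -> R)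
  (p : T) : R :=
  match insub p with Some u => x u | None => lam p end.

Definition in_marked_order_polytope (Pstar : {set T}) (lam : T -> R)
  (x : unmarked Pstar -> R) : Prop :=
  forall p q : T, covers p q -> extend lam x p <= extend lam x q.

Definition in_interior (Pstar : {set T}) (lam : T -> R)
  (x : unmarked Pstar -> R) : Prop :=
  exists2 e : R, 0 < e &
    forall y : unmarked Pstar -> R,
      (forall u, `|y u - x u| < e) -> in_marked_order_polytope lam y.

Definition is_lattice_point (Pstar : {set T}) (x : unmarked Pstar -> R) : Prop :=
  forall u, exists z : int, x u = z%:~R.

End MarkedOrderPolytope.

(* An interior point satisfies every covering inequality strictly: moving the
   two ends of a cover apart by a small amount stays inside the polytope. For a
   lattice point this means a rise of at least one along every cover, which is
   exactly the rise of r, so x - r is weakly increasing along covers. Every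
   element lies above a minimal and below a maximal element, both marked, where
   x - r vanishes; hence x = r. Conversely, every point within 1/2 of r in the
   sup norm satisfies all covering inequalities. *)

From mathcomp Require Import all_boot all_order all_algebra.
From mathcomp Require Import reals.
From mathcomp Require Import lra.

Set Implicit Arguments.
Unset Strict Implicit.
Unset Printing Implicit Defensive.
Import Order.TTheory GRing.Theory Num.Theory.
Local Open Scope ring_scope.

Section FinitePoset.
Variables (d : Order.disp_t) (T : finPOrderType d).

Lemma covers_lt (p q : T) : covers p q -> (p < q)%O.
Proof. by case/andP. Qed.

Lemma card_lt_strict_down (z m : T) :
  (z < m)%O -> (#|[set w | (w < z)%O]| < #|[set w | (w < m)%O]|)%N.
Proof.
move=> ltzm; apply/proper_card/properP.
split; last by exists z; rewrite !inE ?ltxx.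
by apply/subsetP => w; rewrite !inE => /lt_trans; apply.
Qed.

Lemma exists_minimal_le (p : T) : exists2 m, minimal_elt m & (m <= p)%O.
Proof.
have [m lemp minm] :=
  @arg_minnP T p (<= p)%O (fun m => #|[set w | (w < m)%O]|) (lexx p).
exists m => //; apply/forallP => z; apply/negP => ltzm.
have := minm z (le_trans (ltW ltzm) lemp).
by rewrite leqNgt card_lt_strict_down.
Qed.

Lemma covers_homo_le (d' : Order.disp_t) (T' : porderType d') (f : T -> T') :
  (forall p q, covers p q -> (f p <= f q)%O) -> {homo f : p q / (p <= q)%O}.
Proof.
move=> f_covers p q; rewrite [(p <= q)%O]le_eqVlt => /orP[/eqP-> //|].
(* Induction on the number of elements strictly between p and q. *)
move: {2}#|_|.+1 (ltnSn #|[set w | (p < w < q)%O]|) => n.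
elim: n p q => // n IH p q size_pq ltpq.
have [/f_covers //|] := boolP (covers p q).
rewrite /covers ltpq => /forallPn[z]; rewrite negbK => /andP[ltpz ltzq].
have sub_pq (A : {set T}) : A \subset [set w | (p < w < q)%O] -> z \notin A ->
    (#|A| < n)%N.
  move=> subA zA; rewrite -ltnS; apply: leq_trans size_pq; rewrite ltnS.
  by apply/proper_card/properP; split; last by exists z; rewrite // inE ltpz.
apply: (le_trans (IH p z _ ltpz) (IH z q _ ltzq));
  apply: sub_pq; rewrite ?inE ?ltxx ?andbF //.
- by apply/subsetP => w; rewrite !inE => /andP[-> /lt_trans]; apply.
- by apply/subsetP => w; rewrite !inE => /andP[/(lt_trans ltpz) -> ->].
Qed.

End FinitePoset.

Lemma exists_maximal_ge (d : Order.disp_t) (T : finPOrderType d) (p : T) :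
  exists2 m, maximal_elt m & (p <= m)%O.
Proof. by have [m minm lemp] := @exists_minimal_le _ T^d p; exists m. Qed.

Lemma covers_homo_extremal_eq (d : Order.disp_t) (T : finPOrderType d)
    (d' : Order.disp_t) (T' : porderType d') (f : T -> T') (c : T') :
  (forall p q, covers p q -> (f p <= f q)%O) ->
  (forall p, minimal_elt p -> f p = c) ->
  (forall p, maximal_elt p -> f p = c) ->
  forall p, f p = c.
Proof.
move=> /covers_homo_le f_homo f_min f_max p; apply/le_anti/andP; split.
- by have [m /f_max <- /f_homo] := exists_maximal_ge p.
- by have [m /f_min <- /f_homo] := exists_minimal_le p.
Qed.

Section MarkedOrderPolytope.
Variables (d : Order.disp_t) (T : finPOrderType d) (R : realType).
Variables (Pstar : {set T}) (lam : T -> R).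

Lemma extend_marked (x : unmarked Pstar -> R) p :
  p \in Pstar -> extend lam x p = lam p.
Proof. by move=> Pp; rewrite /extend insubF ?Pp. Qed.

Lemma extend_val (x : unmarked Pstar -> R) u : extend lam x (val u) = x u.
Proof. by rewrite /extend valK. Qed.

Lemma extend_shift (x : unmarked Pstar -> R) (c : T -> R) p :
  extend lam (fun u => x u + c (val u)) p =
  extend lam x p + (if p \in Pstar then 0 else c p).
Proof.
rewrite /extend; case: insubP => [u /negbTE -> <- //|]; rewrite negbK => ->.
by rewrite addr0.
Qed.

Lemma extend_int (x : unmarked Pstar -> R) p :
  (forall a, exists z : int, lam a = z%:~R) -> is_lattice_point x ->
  exists z : int, extend lam x p = z%:~R.
Proof. by move=> lam_int x_int; rewrite /extend; case: insubP. Qed.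

Lemma extend_near (x : unmarked Pstar -> R) (e : R) :
  0 < e -> (forall u, `|x u - lam (val u)| < e) ->
  forall p, `|extend lam x p - lam p| < e.
Proof.
move=> e_gt0 x_near p; rewrite /extend.
by case: insubP => [u _ <-|]; rewrite ?subrr ?normr0.
Qed.

Lemma interior_covers_lt (x : unmarked Pstar -> R) p q :
  in_interior lam x -> covers p q -> (p \notin Pstar) || (q \notin Pstar) ->
  extend lam x p < extend lam x q.
Proof.
case=> e e_gt0 ball_in cpq unmarked_pq.
have neq_pq : (p == q) = false by rewrite lt_eqF ?covers_lt.
pose c w : R := if w == p then e / 2 else if w == q then - (e / 2) else 0.
have c_small w : `|c w| < e.
  by rewrite /c; do 2?case: ifP => _; rewrite ?normrN ?normr0 ?ger0_norm; lra.
have shifted_in : in_marked_order_polytope lam (fun u => x u + c (val u)).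
  by apply: ball_in => u; rewrite addrC addKr.
have := shifted_in p q cpq; rewrite !extend_shift /c eqxx eq_sym neq_pq eqxx.
by move: unmarked_pq; case: (p \in Pstar); case: (q \in Pstar) => //= _; lra.
Qed.

Lemma interior_lattice_covers_gap (x : unmarked Pstar -> R) p q :
  (forall a, exists z : int, lam a = z%:~R) ->
  (forall a b, covers a b -> a \in Pstar -> b \in Pstar ->
    lam a + 1 <= lam b) ->
  is_lattice_point x -> in_interior lam x -> covers p q ->
  extend lam x p + 1 <= extend lam x q.
Proof.
move=> lam_int lam_gap x_int x_interior cpq.
have [a xp] := extend_int p lam_int x_int.
have [b xq] := extend_int q lam_int x_int.
have [Pp | unmarked_p] := boolP (p \in Pstar);
  have [Pq | unmarked_q] := boolP (q \in Pstar);
  first by rewrite !extend_marked ?lam_gap.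
all: have := interior_covers_lt x_interior cpq.
all: rewrite xp xq ?unmarked_p ?unmarked_q ?orbT.
all: by move=> /(_ isT); rewrite ltr_int -lezD1 -(ler_int R) rmorphD.
Qed.

Lemma in_interior_restriction (x : unmarked Pstar -> R) :
  (forall p q, covers p q -> lam p + 1 <= lam q) ->
  (forall u, x u = lam (val u)) -> in_interior lam x.
Proof.
move=> lam_gap x_lam; have half_gt0 : 0 < 1 / 2 :> R by lra.
exists (1 / 2) => // y y_near p q cpq.
have near_lam u : `|y u - lam (val u)| < 1 / 2 by rewrite -x_lam.
move: (extend_near half_gt0 near_lam p) (extend_near half_gt0 near_lam q).
by move=> /ltr_normlP[? ?] /ltr_normlP[? ?]; have := lam_gap p q cpq; lra.
Qed.

End MarkedOrderPolytope.

Theorem proposition3p1 (d : Order.disp_t) (T : finPOrderType d) (R : realType)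
  (r : T -> int) (Pstar : {set T}) :
  is_rank_function r ->
  (forall p : T, minimal_elt p -> p \in Pstar) ->
  (forall p : T, maximal_elt p -> p \in Pstar) ->
  forall x : unmarked Pstar -> R,
    (is_lattice_point x /\ in_interior (fun a => (r a)%:~R) x) <->
    (forall u : unmarked Pstar, x u = (r (val u))%:~R).
Proof.
move=> r_rank min_marked max_marked x; set lam := fun a => (r a)%:~R : R.
have lam_gap p q : covers p q -> lam p + 1 = lam q.
  by rewrite /lam => /r_rank ->; rewrite rmorphB /= subrK.
split=> [[x_int x_interior] u | x_r].
- have x_gap p q : covers p q -> extend lam x p + 1 <= extend lam x q.
    apply: interior_lattice_covers_gap => // [a|a b /lam_gap -> //].
    by exists (r a).
  have shift_eq0 :=
    covers_homo_extremal_eq (f := fun p => extend lam x p - lam p) (c := 0).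
  apply/eqP; rewrite -subr_eq0 -(extend_val lam x).
  apply/eqP/shift_eq0 => [a b cab|a|a].
  + by have := x_gap a b cab; have := lam_gap a b cab; lra.
  + by move/min_marked/(extend_marked lam x)->; rewrite subrr.
  + by move/max_marked/(extend_marked lam x)->; rewrite subrr.
- split=> [u|]; first by exists (r (val u)).
  by apply: in_interior_restriction => [p q /lam_gap ->|].
Qed.
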